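(* Let $G$ be a finite graph with no isolated vertices such that there is no nontrivial circuit injection $f:G_M\rightarrow B$ with $B$ a binary matroid. Then $G$ is 2-connected.
   Context: Graphs are undirected without loops or multiple edges. $G_M$ is the cycle matroid of $G$ (cells: edges; circuits: edge sets of cycles of $G$). A matroid is a pair $(S,\mathscr{C})$, $S\neq\emptyset$, $\mathscr{C}\subseteq 2^S$, satisfying: (I) $A,B\in\mathscr{C}$, $A\subseteq B$ implies $A=B$; (II) $A,B\in\mathscr{C}$, $a\in A\cap B$, $b\in (A\cup B)\setminus(A\cap B)$ implies there exists $D\in\mathscr{C}$ with $D\subseteq A\cup B$, $a\notin D$, $b\in D$. A matroid is binary if the symmetric difference of any two circuits is a union of pairwise disjoint circuits. A circuit injection $f:G_M\rightarrow B$ is a bijection from $E(G)$ onto the cells of $B$ sending each circuit of $G$ to a circuit of $B$; it is nontrivial if $B$ has a circuit not equal to the image of any circuit of $G$. *)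

From mathcomp Require Import all_boot.
Set Implicit Arguments. Unset Strict Implicit. Unset Printing Implicit Defensive.

(* A finite simple graph: vertex type V : finType, adjacency e : rel V,
   assumed symmetric and irreflexive (stated as hypotheses of the theorem). *)

Definition edges (V : finType) (e : rel V) : {set {set V}} :=
  [set E : {set V} | [exists x, [exists y, e x y && (E == [set x; y])]]].

Definition cycle_edge_set (V : finType) (e : rel V) (D : {set {set V}}) : Prop :=
  exists s : seq V, [/\ uniq s, 2 < size s, cycle e s &
    D = [set [set x; next s x] | x in s]].

Definition no_isolated_vertices (V : finType) (e : rel V) : Prop :=
  forall v : V, exists u, e v u.

Definition is_matroid (S : finType) (C : {set {set S}}) : Prop :=
  [/\ 0 < #|S|,
      (forall A B, A \in C -> B \in C -> A \subset B -> A = B) &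
      (forall A B a b, A \in C -> B \in C -> a \in A :&: B ->
         b \in (A :|: B) :\: (A :&: B) ->
         exists2 D, D \in C & [/\ D \subset A :|: B, a \notin D & b \in D])].

Definition is_binary (S : finType) (C : {set {set S}}) : Prop :=
  forall A B, A \in C -> B \in C ->
    exists2 P : {set {set S}}, P \subset C &
      trivIset P /\ cover P = (A :\: B) :|: (B :\: A).

Definition circuit_injection (V : finType) (e : rel V) (S : finType)
  (C : {set {set S}}) (f : {set V} -> S) : Prop :=
  [/\ {in edges e &, injective f}, f @: edges e = [set: S] &
      forall D, cycle_edge_set e D -> f @: D \in C].

Definition nontrivial_ci (V : finType) (e : rel V) (S : finType)
  (C : {set {set S}}) (f : {set V} -> S) : Prop :=
  exists2 X, X \in C & forall D, cycle_edge_set e D -> f @: D != X.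

Definition two_connected (V : finType) (e : rel V) : Prop :=
  [/\ 2 < #|V|, (forall x y, connect e x y) &
      forall v x y, x != v -> y != v ->
        connect [rel a b | [&& e a b, a != v & b != v]] x y].

From mathcomp Require Import all_boot zify.
From Stdlib Require Import Classical.
Set Implicit Arguments. Unset Strict Implicit. Unset Printing Implicit Defensive.

(* Suppose G is not 2-connected. Pick g : V -> V injective on every cycle of G
   and let B be the matroid on E(G) whose circuits are the minimal nonempty
   edge sets crossing every fibre cut of g an even number of times: B is the
   (binary) cycle matroid of the quotient G/g, and every cycle of G remains a
   circuit of B, so E(G) -> B is a circuit injection. It is nontrivial as soon
   as g creates a loop or two parallel edges, since G has no cycle with at most
   two edges: if G has at most two vertices collapse V to a point; if G is
   disconnected glue an edge of one component onto an edge of another; if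
   G - v is disconnected identify two neighbours of v lying in different
   components of G - v. *)

Lemma odd_card_symdiff (T : finType) (A B : {set T}) :
  odd #|(A :\: B) :|: (B :\: A)| = odd #|A| (+) odd #|B|.
Proof.
have disjD : (A :\: B) :&: (B :\: A) = set0.
  by apply/setP=> x; rewrite !inE; case: (x \in A); case: (x \in B); rewrite ?andbF.
rewrite cardsU disjD cards0 subn0 -(cardsID B A) -(cardsID A B) [B :&: A]setIC !oddD.
by case: (odd _); case: (odd _); case: (odd _).
Qed.

Lemma exists_in_set2 (T : finType) (P : pred T) a b :
  [exists x in [set a; b], P x] = P a || P b.
Proof.
apply/exists_inP/orP => [[x /set2P[]->]|[Pa|Pb]]; [left|right|exists a|exists b] => //.
  by rewrite set21.
by rewrite set22.
Qed.

Section EvenSets.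
Variables (S K : finType) (Q : K -> {set S}).

Definition even_set (Y : {set S}) := [forall k, ~~ odd #|Y :&: Q k|].

(* The circuits of the binary matroid whose cocycle space is spanned by the
   [Q k]: minimal nonempty sets orthogonal to every [Q k] over GF(2). *)
Definition even_circuits : {set {set S}} :=
  [set D | minset (fun D => (D != set0) && even_set D) D].

Lemma even_setSD (A B : {set S}) :
  even_set A -> even_set B -> even_set ((A :\: B) :|: (B :\: A)).
Proof.
move=> /forallP evA /forallP evB; apply/forallP=> k.
have -> : ((A :\: B) :|: (B :\: A)) :&: Q k =
          ((A :&: Q k) :\: (B :&: Q k)) :|: ((B :&: Q k) :\: (A :&: Q k)).
  by apply/setP=> x; rewrite !inE; case: (x \in A); case: (x \in B); case: (x \in Q k).
by rewrite odd_card_symdiff; move: (evA k) (evB k); case: (odd _); case: (odd _).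
Qed.

Lemma even_setD (X D : {set S}) :
  D \subset X -> even_set X -> even_set D -> even_set (X :\: D).
Proof.
move=> sDX evX evD; have := even_setSD evX evD.
by move: sDX; rewrite -setD_eq0 => /eqP ->; rewrite setU0.
Qed.

Lemma even_set_partition (X : {set S}) : even_set X ->
  exists2 P : {set {set S}}, P \subset even_circuits & trivIset P /\ cover P = X.
Proof.
elim: {X}_.+1 {-2}X (ltnSn #|X|) => // n IH X ltXn evX.
have [->|X0] := eqVneq X set0.
  by exists set0; rewrite ?sub0set // /trivIset /cover !big_set0 cards0.
have PX : (X != set0) && even_set X by rewrite X0 evX.
have [D minD sDX] := @minset_exists _ (fun D => (D != set0) && even_set D) X PX.
have /andP[D0 evD] := minsetp minD.
have ltXDn : #|X :\: D| < n.
  rewrite cardsD (setIidPr sDX) -card_gt0 in D0 *.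
  have := subset_leq_card sDX; lia.
have [P sPC [trP coverP]] := IH _ ltXDn (even_setD sDX evX evD).
have DC : D \in even_circuits by rewrite inE.
exists (D |: P); first by rewrite subUset sub1set DC.
have disjDP : [disjoint cover [set D] & cover P].
  by rewrite cover1 coverP disjoint_sym disjoints_subset setDE subsetIr.
split; first exact: trivIsetU (trivIset1 D) trP disjDP.
rewrite /cover bigcup_setU -/(cover _) -/(cover _) cover1 coverP.
by rewrite setDE setUIr setUCr setIT (setUidPr sDX).
Qed.

Lemma even_circuits_matroid : 0 < #|S| -> is_matroid even_circuits.
Proof.
move=> S0; split=> // [A B | A B a b].
  rewrite !inE => /minsetp/andP[A0 evA] minB sAB.
  by apply: (minsetinf minB _ sAB); rewrite A0 evA.
rewrite !inE => /minsetp/andP[_ evA] /minsetp/andP[_ evB] abA baB.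
have [P sPC [_ coverP]] := even_set_partition (even_setSD evA evB).
have : b \in cover P by rewrite coverP; move: baB; rewrite !inE; do 2!case: (b \in _).
case/bigcupP=> D PD bD; exists D; first exact: subsetP sPC D PD.
have sD : D \subset (A :\: B) :|: (B :\: A) by rewrite -coverP bigcup_sup.
split=> //.
  by apply: subset_trans sD _; apply/subsetP=> x; rewrite !inE; do 2!case: (x \in _).
by apply: contraL abA => /(subsetP sD); rewrite !inE; do 2!case: (a \in _).
Qed.

Lemma even_circuits_binary : is_binary even_circuits.
Proof.
move=> A B; rewrite !inE => /minsetp/andP[_ evA] /minsetp/andP[_ evB].
exact: even_set_partition (even_setSD evA evB).
Qed.

End EvenSets.

Section EvenSetsPreimage.
Variables (S S' K : finType) (Q : K -> {set S}) (h : S' -> S).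
Hypothesis h_inj : injective h.

Lemma even_set_preimage (Y : {set S'}) :
  even_set (fun k => h @^-1: Q k) Y = even_set Q (h @: Y).
Proof.
apply: eq_forallb => k; rewrite -(card_imset _ h_inj).
suff -> : h @: (Y :&: h @^-1: Q k) = h @: Y :&: Q k by [].
apply/setP=> x; apply/imsetP/setIP=> [[y /setIP[yY]]|[/imsetP[y yY ->]]].
  by rewrite inE => Qy ->; rewrite imset_f.
by move=> Qy; exists y; rewrite // !inE yY.
Qed.

Lemma even_circuits_preimage (Y : {set S'}) :
  h @: Y \in even_circuits Q -> Y \in even_circuits (fun k => h @^-1: Q k).
Proof.
rewrite !inE => /minsetP[/andP[Y0 evY] minY]; apply/minsetP.
rewrite even_set_preimage -(imset_eq0 h) Y0 evY; split=> // B /andP[B0 evB] sBY.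
apply: (imset_inj h_inj); apply: minY (imsetS h sBY).
by rewrite imset_eq0 B0 -even_set_preimage.
Qed.

End EvenSetsPreimage.

Section CycleEdges.
Variables (T : finType) (s : seq T).
Hypotheses (s_uniq : uniq s) (s_size : 2 < size s).

Definition next_edge x : {set T} := [set x; next s x].
Definition cycle_edges : {set {set T}} := [set next_edge x | x in s].

Lemma uniq_next2 x : x \in s -> uniq [:: x; next s x; next s (next s x)].
Proof.
move=> xs; have := orbit_uniq (next s) x.
rewrite /orbit (order_cycle (cycle_next s_uniq) s_uniq xs).
case: (size s) s_size => [|[|[|n]]] //= _.
by move=> /and3P[]; rewrite !inE !negb_or => /and3P[-> ->] _ /andP[-> _].
Qed.

Lemma cycle_edges_star c : c \in s ->
  [set E in cycle_edges | c \in E] = [set next_edge (prev s c); next_edge c].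
Proof.
move=> cs; apply/setP=> E; rewrite !inE; apply/andP/orP => [[/imsetP[x xs ->]]|].
  by rewrite !inE => /orP[]/eqP->; [right | left; rewrite prev_next].
case=> /eqP ->; split; rewrite ?imset_f ?mem_prev // !inE ?next_prev ?eqxx ?orbT //.
Qed.

Lemma card_cycle_edges_star c : c \in s -> #|[set E in cycle_edges | c \in E]| = 2.
Proof.
move=> cs; rewrite cycle_edges_star // cards2.
suff -> : next_edge (prev s c) != next_edge c by []; apply/eqP => Epc.
have := uniq_next2 (etrans (mem_prev s c) cs); rewrite next_prev //.
have : next s c \in next_edge (prev s c) by rewrite Epc !inE eqxx orbT.
by rewrite !inE => /orP[]/eqP->; rewrite ?next_prev //= !inE eqxx ?orbT ?andbF.
Qed.

Lemma card_cycle_edges : #|cycle_edges| = size s.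
Proof.
rewrite card_in_imset ?(card_uniqP s_uniq) // => x y xs ys Exy.
apply/eqP; apply: contraT => xy.
have : x \in next_edge y by rewrite -Exy !inE eqxx.
rewrite !inE (negbTE xy) /= => /eqP xny.
have : y \in next_edge x by rewrite Exy !inE eqxx.
rewrite !inE eq_sym (negbTE xy) /= => /eqP ynx.
by have := uniq_next2 ys; rewrite -xny -ynx /= mem_seq2 eqxx orbT.
Qed.

Lemma cycle_edges_odd_vertex (Y : {set {set T}}) :
  Y \subset cycle_edges -> Y != set0 -> Y != cycle_edges ->
  exists2 c, c \in s & #|[set E in Y | c \in E]| = 1.
Proof.
move=> sYC Y0 YC.
have [x /and3P[xs xY nxY]] :
    exists x, [&& x \in s, next_edge x \in Y & next_edge (next s x) \notin Y].
  apply/existsP; apply: contraNT YC => /existsPn noexit.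
  case/set0Pn: Y0 => _ /[dup] /(subsetP sYC) /imsetP[x0 x0s ->] x0Y.
  have iter_s n : iter n (next s) x0 \in s by elim: n => //= n; rewrite mem_next.
  rewrite eqEsubset sYC; apply/subsetP=> _ /imsetP[y ys ->].
  have := fconnect_cycle (cycle_next s_uniq) x0s y; rewrite ys => /iter_findex <-.
  elim: (findex _ _ _) => //= n IHn.
  by have := noexit (iter n (next s) x0); rewrite iter_s IHn negbK.
exists (next s x); first by rewrite mem_next.
suff -> : [set E in Y | next s x \in E] = [set next_edge x] by rewrite cards1.
apply/setP=> E; rewrite !inE; apply/andP/eqP => [[EY xE]|->]; last first.
  by rewrite xY !inE eqxx orbT.
have : E \in [set E in cycle_edges | next s x \in E] by rewrite inE (subsetP sYC).
rewrite cycle_edges_star ?mem_next // prev_next // !inE => /orP[]/eqP // EN.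
by rewrite -EN EY in nxY.
Qed.

End CycleEdges.

Section Quotient.
Variables (V : finType) (g : V -> V).

Definition crosses k (E : {set V}) :=
  [exists x in E, g x == k] && [exists x in E, g x != k].

Definition fibre_cut k : {set {set V}} := [set E | crosses k E].

Lemma crosses2 k a b : crosses k [set a; b] = (g a == k) (+) (g b == k).
Proof. by rewrite /crosses !exists_in_set2; do 2!case: (g _ == k). Qed.

Section Cycle.
Variable s : seq V.
Hypotheses (s_uniq : uniq s) (s_size : 2 < size s) (g_inj : {in s &, injective g}).

Lemma cycle_edges_fibre_cut (B : {set {set V}}) c :
  B \subset cycle_edges s -> c \in s -> B :&: fibre_cut (g c) = [set E in B | c \in E].
Proof.
move=> sBC cs; apply/setP=> E; rewrite !inE; apply: andb_id2l => EB.
have /imsetP[x xs ->] := subsetP sBC E EB.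
have := uniq_next2 s_uniq s_size xs; rewrite /= !inE negb_or => /andP[/andP[xnx _] _].
rewrite crosses2 (inj_in_eq g_inj xs cs) (inj_in_eq g_inj _ cs) ?mem_next //.
by case: (eqVneq x c) => [<-|_] /=; rewrite ?eqxx ?(eq_sym (next s x)) ?(negbTE xnx).
Qed.

Lemma cycle_edges_even_circuit : cycle_edges s \in even_circuits fibre_cut.
Proof.
rewrite inE; apply/minsetP; split.
  rewrite -card_gt0 card_cycle_edges // (ltnW (ltnW s_size)) /=.
  apply/forallP=> k; case: (pickP [pred c in s | g c == k]) => [c /andP[cs /eqP<-]|nk].
    by rewrite cycle_edges_fibre_cut // card_cycle_edges_star.
  suff -> : cycle_edges s :&: fibre_cut k = set0 by rewrite cards0.
  apply/setP=> E; rewrite !inE; apply/negP=> /andP[/imsetP[x xs ->]].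
  by rewrite crosses2; move: (nk x) (nk (next s x)); rewrite /= mem_next xs !andTb => -> ->.
move=> B /andP[B0 /forallP evB] sBC; apply/eqP; apply: contraT => BC.
have [c cs oddc] := cycle_edges_odd_vertex s_uniq sBC B0 BC.
by have := evB (g c); rewrite cycle_edges_fibre_cut // oddc.
Qed.

End Cycle.

Lemma loop_even_circuit a b : g a = g b -> [set [set a; b]] \in even_circuits fibre_cut.
Proof.
move=> gab; rewrite inE; apply/minsetP; split=> [|B /andP[B0 _]].
  rewrite -card_gt0 cards1; apply/forallP=> k.
  suff -> : [set [set a; b]] :&: fibre_cut k = set0 by rewrite cards0.
  by apply/setP=> E; rewrite !inE; case: eqP => // ->; rewrite crosses2 gab addbb.
by rewrite subset1 (negbTE B0) orbF => /eqP.
Qed.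

Lemma parallel_even_circuit a b a' b' :
  g a = g a' -> g b = g b' -> g a != g b -> [set a; b] != [set a'; b'] ->
  [set [set a; b]; [set a'; b']] \in even_circuits fibre_cut.
Proof.
move=> gaa gbb gab E12; set P := [set _; _].
have crossP k E : E \in P -> crosses k E = (g a == k) (+) (g b == k).
  by case/set2P=> ->; rewrite crosses2 -?gaa -?gbb.
have cardP : #|P| = 2 by rewrite cards2 E12.
rewrite inE; apply/minsetP; split=> [|B /andP[B0 /forallP evB] sBP].
  rewrite -card_gt0 cardP; apply/forallP=> k.
  case ck: ((g a == k) (+) (g b == k)).
    suff -> : P :&: fibre_cut k = P by rewrite cardP.
    by apply/setIidPl/subsetP=> E EP; rewrite inE crossP.
  suff -> : P :&: fibre_cut k = set0 by rewrite cards0.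
  apply/setP=> E; rewrite in_setI in_set0 [_ \in fibre_cut k]inE.
  by apply/negP=> /andP[EP]; rewrite crossP // ck.
have evB' := evB (g a).
rewrite (setIidPl _) in evB'; last first.
  by apply/subsetP=> E EB; rewrite inE crossP ?(subsetP sBP) // eqxx eq_sym (negbTE gab).
apply/eqP; rewrite eqEcard sBP cardP /=.
by rewrite -card_gt0 in B0; move: evB' B0; case: #|B| => [|[|]].
Qed.

End Quotient.

Definition identify2 (T : eqType) (x y x' y' z : T) :=
  if z == y then x else if z == y' then x' else z.

Lemma identify2_eq (T : finType) (x y x' y' u w : T) : x != x' -> u != w ->
  identify2 x y x' y' u = identify2 x y x' y' w ->
  [set u; w] = [set x; y] \/ [set u; w] = [set x'; y'].
Proof.
rewrite /identify2 => xx' uw.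
case: (eqVneq u y) => [uy|uy]; case: (eqVneq w y) => [wy|wy];
case: (eqVneq u y') => [uy'|uy']; case: (eqVneq w y') => [wy'|wy'] => //= E; subst;
  by [rewrite eqxx in uw | rewrite eqxx in xx' | left | right
     | left; rewrite setUC | right; rewrite setUC].
Qed.

Lemma connect_exit (T : finType) (r : rel T) (A : {pred T}) a b :
  connect r a b -> a \in A -> b \notin A ->
  exists u w, [/\ u \in A, w \notin A & r u w].
Proof.
move=> /connectP[p]; elim: p a => [|c p IH] a /=; first by move=> _ -> ->.
move=> /andP[rac pcp] lastb aA bA.
by case cA: (c \in A); [apply: IH pcp lastb cA bA | exists a, c; rewrite cA].
Qed.

Lemma path_connect_sym (T : finType) (r : rel T) x p :
  symmetric r -> path r x p -> {in x :: p &, forall u w, connect r u w}.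
Proof.
move=> r_sym xp u w ux wx; apply: (@connect_trans _ _ x); last exact: path_connect xp w wx.
by rewrite (sym_connect_sym r_sym); exact: path_connect xp u ux.
Qed.

Lemma cycle_connect (T : finType) (r : rel T) s :
  symmetric r -> cycle r s -> {in s &, forall u w, connect r u w}.
Proof.
case: s => [|x p] // r_sym; rewrite /= rcons_path => /andP[xp _].
exact: path_connect_sym.
Qed.

Definition del_vertex (T : finType) (r : rel T) v : rel T :=
  [rel a b | [&& r a b, a != v & b != v]].

Lemma del_vertex_sym (T : finType) (r : rel T) v :
  symmetric r -> symmetric (del_vertex r v).
Proof. by move=> r_sym a b; rewrite /del_vertex /= r_sym [(a != v) && _]andbC. Qed.

Lemma cycle_connect_del_vertex (T : finType) (r : rel T) s v :
  symmetric r -> uniq s -> cycle r s ->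
  {in s &, forall u w, u != v -> w != v -> connect (del_vertex r v) u w}.
Proof.
move=> r_sym s_uniq s_cycle u w us ws uv wv.
have sub_r : {in predC1 v &, subrel r (del_vertex r v)}.
  by move=> a b; rewrite !inE => av bv rab; rewrite /del_vertex /= rab av bv.
case vs: (v \in s); last first.
  have s_cycle_v : cycle (del_vertex r v) s.
    apply: (sub_in_cycle sub_r) s_cycle.
    by apply/allP=> z zs; rewrite inE; apply: contraTneq zs => ->; rewrite vs.
  exact: cycle_connect (del_vertex_sym v r_sym) s_cycle_v u w us ws.
case/rot_to: vs => i [|x p] rot_s.
  by move: us; rewrite -(mem_rot i) rot_s inE (negbTE uv).
have: uniq (v :: x :: p) by rewrite -rot_s rot_uniq.
have: cycle r (v :: x :: p) by rewrite -rot_s rot_cycle.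
rewrite /= rcons_path => /and3P[_ xp _] /andP[vxp _].
have mem_xp z : z \in s -> z != v -> z \in x :: p.
  by rewrite -(mem_rot i) rot_s inE => /orP[/eqP->|]; rewrite ?eqxx.
apply: (path_connect_sym (del_vertex_sym v r_sym) _ (mem_xp u us uv) (mem_xp w ws wv)).
apply: (sub_in_path sub_r) xp.
by apply/allP=> z zxp; rewrite inE; apply: contraNneq vxp => <-.
Qed.

Lemma neighbor_in_component (T : finType) (r : rel T) v a :
  connect r a v -> a != v ->
  exists k, [/\ connect (del_vertex r v) a k, k != v & r k v].
Proof.
move=> conn_av av.
pose A := [pred z | connect (del_vertex r v) a z && (z != v)].
have aA : a \in A by rewrite inE connect0 av.
have vA : v \notin A by rewrite inE eqxx andbF.
have [u [w [/andP[au uv] wA ruw]]] := connect_exit conn_av aA vA.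
have wv : w = v.
  apply/eqP; apply: contraNT wA => wv; rewrite inE wv andbT.
  by apply: connect_trans au (connect1 _); rewrite /del_vertex /= ruw uv wv.
by subst w; exists u.
Qed.

Section Graph.
Variables (V : finType) (e : rel V).

Lemma edge_in a b : e a b -> [set a; b] \in edges e.
Proof.
by move=> eab; rewrite inE; apply/existsP; exists a; apply/existsP; exists b; rewrite eab eqxx.
Qed.

Lemma cycle_edge_set_subset D : cycle_edge_set e D -> D \subset edges e.
Proof.
case=> s [_ _ s_cycle ->]; apply/subsetP=> _ /imsetP[x xs ->].
exact/edge_in/(next_cycle s_cycle).
Qed.

Lemma cycle_edge_set_card D : cycle_edge_set e D -> 2 < #|D|.
Proof. by case=> s [s_uniq s_size _ ->]; rewrite card_cycle_edges. Qed.

Definition on_common_cycle x y : Prop :=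
  exists s, [/\ uniq s, 2 < size s, cycle e s, x \in s & y \in s].

Hypotheses (e_sym : symmetric e) (e_irr : irreflexive e).
Hypothesis e_noiso : no_isolated_vertices e.
Hypothesis no_binary_ci : forall (S : finType) (C : {set {set S}}) (f : {set V} -> S),
  is_matroid C -> is_binary C -> circuit_injection e C f -> ~ nontrivial_ci e C f.

Lemma quotient_circuit_cycle (g : V -> V) (Y : {set {set V}}) :
  (forall s, uniq s -> 2 < size s -> cycle e s -> {in s &, injective g}) ->
  Y \subset edges e -> Y \in even_circuits (fibre_cut g) -> cycle_edge_set e Y.
Proof.
move=> g_inj sYE Ycirc.
have [E0 E0Y] : exists E0, E0 \in Y.
  by apply/set0Pn; move: Ycirc; rewrite inE => /minsetp/andP[].
pose S := {E | E \in edges e}.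
pose f E : S := insubd (Sub E0 (subsetP sYE E0 E0Y)) E.
have fK : {in edges e, cancel f val} := insubdK _.
have valf (Z : {set {set V}}) : Z \subset edges e -> val @: (f @: Z) = Z.
  move=> sZE; rewrite -imset_comp -[RHS]imset_id; apply: eq_in_imset => E EZ /=.
  exact: fK (subsetP sZE E EZ).
pose C : {set {set S}} := even_circuits (fun k => val @^-1: fibre_cut g k).
have circ_f (Z : {set {set V}}) :
    Z \subset edges e -> Z \in even_circuits (fibre_cut g) -> f @: Z \in C.
  by move=> sZE Zc; apply: (even_circuits_preimage val_inj); rewrite valf.
apply: NNPP => Y_not_cycle; apply: (no_binary_ci (C := C) (f := f)).
- by apply: even_circuits_matroid; apply/card_gt0P; exists (f E0).
- exact: even_circuits_binary.
- split.
  + by move=> E1 E2 E1e E2e fE; rewrite -(fK E1) // -(fK E2) // fE.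
  + apply/setP=> E; rewrite in_setT; apply/imsetP; exists (val E); first exact: valP.
    by rewrite /f valKd.
  + move=> D Dcyc; apply: circ_f; first exact: cycle_edge_set_subset.
    case: Dcyc => s [s_uniq s_size s_cycle ->].
    exact: cycle_edges_even_circuit (g_inj s s_uniq s_size s_cycle).
- exists (f @: Y); first exact: circ_f.
  move=> D Dcyc; apply/eqP=> fDY; apply: Y_not_cycle.
  by rewrite -(valf Y sYE) -fDY valf // cycle_edge_set_subset.
Qed.

Lemma identified_edges_contra x x' y y' :
  e x x' -> e y y' -> x != y -> x != y' -> x' != y ->
  ~ on_common_cycle x y -> x' = y' \/ ~ on_common_cycle x' y' -> False.
Proof.
move=> exx' eyy' xy xy' x'y no_xy no_x'y'.
have xx' : x != x' by apply: contraTneq exx' => ->; rewrite e_irr.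
have yy' : y != y' by apply: contraTneq eyy' => ->; rewrite e_irr.
set g := identify2 x y x' y'.
have g_inj s : uniq s -> 2 < size s -> cycle e s -> {in s &, injective g}.
  move=> s_uniq s_size s_cycle u w us ws guw; apply/eqP; apply: contraT => uw; exfalso.
  have mem_s z : z \in [set u; w] -> z \in s by case/set2P=> ->.
  case: (identify2_eq xx' uw guw) => uwE.
    by apply: no_xy; exists s; split; rewrite // mem_s // uwE !inE eqxx ?orbT.
  case: no_x'y' => [x'y'|no_x'y']; last first.
    by apply: no_x'y'; exists s; split; rewrite // mem_s // uwE !inE eqxx ?orbT.
  rewrite -x'y' setUid in uwE.
  have /set1P ux' : u \in [set x'] by rewrite -uwE set21.
  have /set1P wx' : w \in [set x'] by rewrite -uwE set22.
  by rewrite ux' wx' eqxx in uw.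
have gx : g x = x by rewrite /g /identify2 (negbTE xy) (negbTE xy').
have gy : g y = x by rewrite /g /identify2 eqxx.
have gx' : g x' = x' by rewrite /g /identify2 (negbTE x'y); case: eqP.
have gy' : g y' = x' by rewrite /g /identify2 eq_sym (negbTE yy') eqxx.
have E12 : [set x; x'] != [set y; y'].
  by apply: contraNneq xy => E; move: (set21 x x'); rewrite E !inE (negbTE xy') orbF.
have gxx' : g x != g x' by rewrite gx gx'.
have Ycirc := parallel_even_circuit (etrans gx (esym gy)) (etrans gx' (esym gy'))
  gxx' E12.
have sYE : [set [set x; x']; [set y; y']] \subset edges e.
  by rewrite subUset !sub1set !edge_in.
by move/cycle_edge_set_card: (quotient_circuit_cycle g_inj sYE Ycirc); rewrite cards2 E12.
Qed.

Lemma card_vertices_gt2 : 0 < #|V| -> 2 < #|V|.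
Proof.
case/card_gt0P=> a _; rewrite ltnNge; apply/negP=> V2.
have [b eab] := e_noiso a.
have g_inj s : uniq s -> 2 < size s -> cycle e s -> {in s &, injective (fun=> a)}.
  move=> s_uniq; rewrite -(card_uniqP s_uniq) => s_gt2.
  by have := leq_trans s_gt2 (leq_trans (max_card _) V2).
have Ycirc := @loop_even_circuit _ (fun=> a) a b erefl.
have sYE : [set [set a; b]] \subset edges e by rewrite sub1set edge_in.
by move/cycle_edge_set_card: (quotient_circuit_cycle g_inj sYE Ycirc); rewrite cards1.
Qed.

Lemma connected x y : connect e x y.
Proof.
apply: contraT => nxy; exfalso.
have [x' exx'] := e_noiso x; have [y' eyy'] := e_noiso y.
have xx' : connect e x x' := connect1 exx'.
have nxy' : ~~ connect e x y'.
  by apply: contra nxy => xy'; apply: connect_trans xy' (connect1 _); rewrite e_sym.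
apply: (identified_edges_contra exx' eyy').
- by apply: contraNneq nxy => ->.
- by apply: contraNneq nxy' => ->.
- by apply: contraNneq nxy => <-.
- by case=> s [_ _ s_cycle xs ys]; rewrite (cycle_connect e_sym s_cycle xs ys) in nxy.
- right; case=> s [_ _ s_cycle x's y's]; case/negP: nxy'.
  exact: connect_trans xx' (cycle_connect e_sym s_cycle x's y's).
Qed.

Lemma connected_del_vertex v x y : x != v -> y != v -> connect (del_vertex e v) x y.
Proof.
move=> xv yv; apply: contraT => nxy; exfalso.
have [k [xk kv ekv]] := neighbor_in_component (connected x v) xv.
have [l [yl lv elv]] := neighbor_in_component (connected y v) yv.
have nxl : ~~ connect (del_vertex e v) x l.
  apply: contra nxy => xl; apply: connect_trans xl _.
  by rewrite (sym_connect_sym (del_vertex_sym v e_sym)).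
apply: (identified_edges_contra ekv elv _ kv); last by left.
- by apply: contraNneq nxl => <-.
- by rewrite eq_sym.
- case=> s [s_uniq _ s_cycle ks ls]; case/negP: nxl.
  exact: connect_trans xk (cycle_connect_del_vertex e_sym s_uniq s_cycle ks ls kv lv).
Qed.

End Graph.

Theorem corollary2p1 (V : finType) (e : rel V) :
  symmetric e -> irreflexive e -> 0 < #|V| ->
  no_isolated_vertices e ->
  (forall (S : finType) (C : {set {set S}}) (f : {set V} -> S),
      is_matroid C -> is_binary C -> circuit_injection e C f ->
      ~ nontrivial_ci e C f) ->
  two_connected e.
Proof.
move=> e_sym e_irr V_gt0 e_noiso no_binary_ci; split.
- exact: card_vertices_gt2.
- exact: connected.
- exact: connected_del_vertex.
Qed.
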